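(* Let $P$ be a pair of pants with $\pi_1(P)=\langle \mathcal A,\mathcal B,\mathcal C\mid \mathcal C\mathcal B\mathcal A=1\rangle$ (generators corresponding to the boundary components). Then $\mathrm{rep}(\pi_1(P),\mathrm{SO}(3))$ contains a dense open subset consisting of triangular characters. Moreover, from any character one can find a path to triangular characters such that every point of the path except its starting point is triangular.
   Context: $\mathrm{rep}(\pi_1(P),\mathrm{SO}(3))=\mathrm{Hom}(\pi_1(P),\mathrm{SO}(3))/\mathrm{SO}(3)$ (conjugation quotient). For $x\in\mathbb S^2$ and $\theta$, $R_{x,\theta}\in\mathrm{SO}(3)$ denotes the rotation fixing $x$ by angle $\theta$ counterclockwise as seen from $x$. A representation $h:\pi_1(P)\to\mathrm{SO}(3)$ is triangular if there is a nondegenerate spherical triangle (bounded by three geodesic arcs of length $<\pi$, vertices not on a common great circle) with vertices $w_0,w_1,w_2$ in clockwise order and angles $\theta_0,\theta_1,\theta_2$ such that $h(\mathcal A)=R_{w_0,2\theta_0}$, $h(\mathcal B)=R_{w_1,2\theta_1}$, $h(\mathcal C)=R_{w_2,2\theta_2}$ (equivalently, $h$ is the holonomy of the spherical structure on $P$ obtained by gluing two copies of the triangle along corresponding edges). A character is triangular if it is the class of a triangular representation. *)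

From HB Require Import structures.
From mathcomp Require Import all_boot all_order all_algebra.
From mathcomp Require Import all_classical all_reals.
From mathcomp Require Import trigo.
Set Implicit Arguments. Unset Strict Implicit. Unset Printing Implicit Defensive.
Import Order.TTheory GRing.Theory Num.Theory.
Local Open Scope ring_scope.
Local Open Scope classical_set_scope.

Section Defs.
Variable R : realType.

Definition crd (v : 'cV[R]_3) (k : nat) : R := v (inord k) 0.

Definition dot (u v : 'cV[R]_3) : R := (u^T *m v) 0 0.

(* cross-product matrix: crossmx w *m v = w x v *)
Definition crossmx (w : 'cV[R]_3) : 'M[R]_3 :=
  \matrix_(i < 3, j < 3)
    match nat_of_ord i, nat_of_ord j with
    | 0, 1 => - crd w 2 | 0, 2 => crd w 1
    | 1, 0 => crd w 2   | 1, 2 => - crd w 0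
    | 2, 0 => - crd w 1 | 2, 1 => crd w 0
    | _, _ => 0
    end.

(* triple product w0 . (w1 x w2) = det [w0 w1 w2] *)
Definition tripleprod (w0 w1 w2 : 'cV[R]_3) : R := dot w0 (crossmx w1 *m w2).

Definition unit_vec (w : 'cV[R]_3) : Prop := dot w w = 1.

(* R_{x,theta}: rotation about the unit vector x by angle theta, counterclockwise
   as seen from x (right-hand rule), Rodrigues formula. *)
Definition rot (x : 'cV[R]_3) (theta : R) : 'M[R]_3 :=
  cos theta *: 1%:M + sin theta *: crossmx x + (1 - cos theta) *: (x *m x^T).

Definition SO3 (M : 'M[R]_3) : Prop := M^T *m M = 1%:M /\ \det M = 1.

(* A representation pi_1(P) = <A,B,C | CBA = 1> -> SO(3) is the triple
   (h(A), h(B), h(C)) of elements of SO(3) with h(C) h(B) h(A) = 1. *)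
Definition rep3 := ('M[R]_3 * 'M[R]_3 * 'M[R]_3)%type.
Definition hA (h : rep3) := h.1.1.
Definition hB (h : rep3) := h.1.2.
Definition hC (h : rep3) := h.2.

Definition is_hom (h : rep3) : Prop :=
  [/\ SO3 (hA h), SO3 (hB h), SO3 (hC h) & hC h *m hB h *m hA h = 1%:M].

Definition conj_rep (g : 'M[R]_3) (h : rep3) : rep3 :=
  (g *m hA h *m invmx g, g *m hB h *m invmx g, g *m hC h *m invmx g).

(* the character (conjugacy class) of h *)
Definition char_of (h : rep3) : set rep3 :=
  [set h' | exists2 g, SO3 g & h' = conj_rep g h].

Definition is_char (X : set rep3) : Prop := exists2 h, is_hom h & X = char_of h.

(* topology on Hom(pi_1(P), SO(3)) subset of (M_3(R))^3 : entrywise sup distance *)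
Definition close (h h' : rep3) (e : R) : Prop :=
  forall i j : 'I_3, [/\ `|hA h i j - hA h' i j| < e,
                         `|hB h i j - hB h' i j| < e &
                         `|hC h i j - hC h' i j| < e].

Definition open_hom (S : set rep3) : Prop :=
  S `<=` is_hom /\
  forall h, S h -> exists2 e : R, 0 < e &
     forall h', is_hom h' -> close h h' e -> S h'.

(* quotient topology on rep(pi_1(P), SO(3)) *)
Definition open_char (U : set (set rep3)) : Prop :=
  U `<=` is_char /\ open_hom [set h | is_hom h /\ U (char_of h)].

Definition dense_char (U : set (set rep3)) : Prop :=
  forall V, open_char V -> (exists X, V X) -> exists X, V X /\ U X.

Definition char_path (gamma : R -> set rep3) : Prop :=
  (forall t, 0 <= t <= 1 -> is_char (gamma t)) /\
  forall V, open_char V ->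
    forall t, 0 <= t <= 1 -> V (gamma t) ->
      exists2 e : R, 0 < e &
        forall s, 0 <= s <= 1 -> `|s - t| < e -> V (gamma s).

Definition sph_angle (w0 w1 w2 : 'cV[R]_3) (theta : R) : Prop :=
  let u1 := w1 - dot w0 w1 *: w0 in
  let u2 := w2 - dot w0 w2 *: w0 in
  0 < theta < pi /\
  cos theta = dot u1 u2 / (Num.sqrt (dot u1 u1) * Num.sqrt (dot u2 u2)).

(* nondegenerate spherical triangle with vertices w0 w1 w2 in clockwise order
   (seen from outside the sphere), i.e. det[w0 w1 w2] < 0 (which also gives
   non-coplanarity), with angles theta0 theta1 theta2 *)
Definition cw_triangle (w0 w1 w2 : 'cV[R]_3) (t0 t1 t2 : R) : Prop :=
  [/\ unit_vec w0, unit_vec w1, unit_vec w2 & tripleprod w0 w1 w2 < 0] /\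
  [/\ sph_angle w0 w1 w2 t0, sph_angle w1 w2 w0 t1 & sph_angle w2 w0 w1 t2].

Definition triangular (h : rep3) : Prop :=
  exists w0 w1 w2 : 'cV[R]_3, exists t0 t1 t2 : R,
    cw_triangle w0 w1 w2 t0 t1 t2 /\
    [/\ hA h = rot w0 (2 * t0), hB h = rot w1 (2 * t1) & hC h = rot w2 (2 * t2)].

Definition triangular_char (X : set rep3) : Prop :=
  exists h, [/\ is_hom h, X = char_of h & triangular h].

End Defs.

From mathcomp Require Import all_boot all_order all_algebra.
From mathcomp Require Import all_classical all_reals.
From mathcomp Require Import trigo topology normedtype.
From mathcomp Require Import ring lra.
Set Implicit Arguments. Unset Strict Implicit. Unset Printing Implicit Defensive.
Import Order.TTheory GRing.Theory Num.Theory numFieldNormedType.Exports.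
Local Open Scope ring_scope.

(* Every rotation is qrot p for a unit quaternion p. If the imaginary parts of lifts p, q
   of h(A), h(B) are linearly independent, the normalized imaginary parts of p, q and of
   r = -(q p)^* are the vertices of a clockwise spherical triangle whose angles are the
   arccosines of the real parts of p, q, r, and h is the holonomy of that triangle.
   The conjugation invariant skew_gram h equals 1024 Re(p)^2 Re(q)^2 |Im p × Im q|^2, so
   skew_gram h > 0 is an open condition that forces h to be triangular. Moving p and q
   along suitable lines p + t u, q + t w gives, for every t > 0, independent imaginary
   parts and nonzero real parts; after normalization this is a path of representations
   starting at h, which yields both the paths of the theorem and the density. *)

Definition o0 : 'I_3 := @Ordinal 3 0 isT.
Definition o1 : 'I_3 := @Ordinal 3 1 isT.
Definition o2 : 'I_3 := @Ordinal 3 2 isT.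

Lemma ord3P (i : 'I_3) : [\/ i = o0, i = o1 | i = o2].
Proof.
by case: i => [[|[|[|//]]] ?]; [apply: Or31 | apply: Or32 | apply: Or33]; apply: val_inj.
Qed.

Ltac case_ord3 i := case: (ord3P i) => ->.

Section Matrix3.
Variable R : realType.

Definition mx3 (a b c d e f g h i : R) : 'M[R]_3 :=
  \matrix_(r < 3, s < 3)
    match nat_of_ord r, nat_of_ord s with
    | 0, 0 => a | 0, 1 => b | 0, _ => c
    | 1, 0 => d | 1, 1 => e | 1, _ => f
    | _, 0 => g | _, 1 => h | _, _ => i end.

Definition vec3 (x y z : R) : 'cV[R]_3 :=
  \col_(r < 3) match nat_of_ord r with 0 => x | 1 => y | _ => z end.

Lemma mx3E (M : 'M[R]_3) : M = mx3 (M o0 o0) (M o0 o1) (M o0 o2)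
   (M o1 o0) (M o1 o1) (M o1 o2) (M o2 o0) (M o2 o1) (M o2 o2).
Proof. by apply/matrixP => r s; rewrite mxE; case_ord3 r; case_ord3 s. Qed.

Lemma mulmx3 a b c d e f g h i a' b' c' d' e' f' g' h' i' :
  mx3 a b c d e f g h i *m mx3 a' b' c' d' e' f' g' h' i' =
  mx3 (a*a'+b*d'+c*g') (a*b'+b*e'+c*h') (a*c'+b*f'+c*i')
      (d*a'+e*d'+f*g') (d*b'+e*e'+f*h') (d*c'+e*f'+f*i')
      (g*a'+h*d'+i*g') (g*b'+h*e'+i*h') (g*c'+h*f'+i*i').
Proof.
apply/matrixP => r s; rewrite !mxE !big_ord_recr big_ord0 /= !mxE /=.
by case_ord3 r; case_ord3 s; rewrite /= add0r.
Qed.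

Lemma trmx3 a b c d e f g h i : (mx3 a b c d e f g h i)^T = mx3 a d g b e h c f i.
Proof. by apply/matrixP => r s; rewrite !mxE; case_ord3 r; case_ord3 s. Qed.

Lemma addmx3 a b c d e f g h i a' b' c' d' e' f' g' h' i' :
  mx3 a b c d e f g h i + mx3 a' b' c' d' e' f' g' h' i' =
  mx3 (a+a') (b+b') (c+c') (d+d') (e+e') (f+f') (g+g') (h+h') (i+i').
Proof. by apply/matrixP => r s; rewrite !mxE; case_ord3 r; case_ord3 s. Qed.

Lemma submx3 a b c d e f g h i a' b' c' d' e' f' g' h' i' :
  mx3 a b c d e f g h i - mx3 a' b' c' d' e' f' g' h' i' =
  mx3 (a-a') (b-b') (c-c') (d-d') (e-e') (f-f') (g-g') (h-h') (i-i').
Proof. by apply/matrixP => r s; rewrite !mxE; case_ord3 r; case_ord3 s. Qed.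

Lemma scalemx3 k a b c d e f g h i :
  k *: mx3 a b c d e f g h i =
  mx3 (k*a) (k*b) (k*c) (k*d) (k*e) (k*f) (k*g) (k*h) (k*i).
Proof. by apply/matrixP => r s; rewrite !mxE; case_ord3 r; case_ord3 s. Qed.

Lemma mx3_1 : (1%:M : 'M[R]_3) = mx3 1 0 0 0 1 0 0 0 1.
Proof. by apply/matrixP => r s; rewrite !mxE; case_ord3 r; case_ord3 s. Qed.

Lemma det_mx22 (M : 'M[R]_2) : \det M = M 0 0 * M 1 1 - M 0 1 * M 1 0.
Proof.
rewrite (expand_det_row _ ord0) !big_ord_recr big_ord0 /= add0r.
rewrite /cofactor !det_mx11 !mxE /=.
have -> : (widen_ord (leqnSn 1) ord_max : 'I_2) = 0 by apply/val_inj.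
have -> : lift ord0 (0 : 'I_1) = 1 :> 'I_2 by apply/val_inj.
have -> : lift ord_max (0 : 'I_1) = 0 :> 'I_2 by apply/val_inj.
have -> : (ord_max : 'I_2) = 1 by apply/val_inj.
by rewrite expr0 expr1; ring.
Qed.

Lemma det_mx3 a b c d e f g h i :
  \det (mx3 a b c d e f g h i) =
  a * (e * i - f * h) - b * (d * i - f * g) + c * (d * h - e * g).
Proof.
rewrite (expand_det_row _ ord0) !big_ord_recr big_ord0 /= add0r.
by rewrite /cofactor !det_mx22 !mxE /=; ring.
Qed.

Lemma tr_mx3 a b c d e f g h i : \tr (mx3 a b c d e f g h i) = a + e + i.
Proof. by rewrite /mxtrace !big_ord_recr big_ord0 /= !mxE /= add0r. Qed.

Lemma crd_vec3 x y z :
  [/\ crd (vec3 x y z) 0 = x, crd (vec3 x y z) 1 = y & crd (vec3 x y z) 2 = z].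
Proof. by rewrite /crd !mxE !inordK. Qed.

Lemma dot_vec3 a b c x y z : dot (vec3 a b c) (vec3 x y z) = a*x + b*y + c*z.
Proof. by rewrite /dot !mxE !big_ord_recr big_ord0 /= !mxE /= add0r. Qed.

Lemma crossmx_vec3 x y z : crossmx (vec3 x y z) = mx3 0 (-z) y z 0 (-x) (-y) x 0.
Proof.
apply/matrixP => r s; rewrite !mxE; case: (crd_vec3 x y z) => E0 E1 E2.
by case_ord3 r; case_ord3 s; rewrite /= ?E0 ?E1 ?E2.
Qed.

Lemma mulmx3_vec3 a b c d e f g h i x y z :
  mx3 a b c d e f g h i *m vec3 x y z = vec3 (a*x+b*y+c*z) (d*x+e*y+f*z) (g*x+h*y+i*z).
Proof.
apply/matrixP => r s; rewrite !mxE !big_ord_recr big_ord0 /= !mxE /=.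
by case_ord3 r; rewrite /= add0r.
Qed.

Lemma mul_vec3_tr a b c x y z :
  vec3 a b c *m (vec3 x y z)^T = mx3 (a*x) (a*y) (a*z) (b*x) (b*y) (b*z) (c*x) (c*y) (c*z).
Proof.
apply/matrixP => r s; rewrite !mxE !big_ord_recr big_ord0 /= !mxE /=.
by case_ord3 r; case_ord3 s; rewrite /= add0r.
Qed.

Lemma scale_vec3 k x y z : k *: vec3 x y z = vec3 (k*x) (k*y) (k*z).
Proof. by apply/matrixP => r s; rewrite !mxE; case_ord3 r. Qed.

Lemma sub_vec3 a b c x y z : vec3 a b c - vec3 x y z = vec3 (a-x) (b-y) (c-z).
Proof. by apply/matrixP => r s; rewrite !mxE; case_ord3 r. Qed.

Lemma tripleprod_vec3 a b c d e f g h i :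
  tripleprod (vec3 a b c) (vec3 d e f) (vec3 g h i) =
  a * (e * i - f * h) - b * (d * i - f * g) + c * (d * h - e * g).
Proof. by rewrite /tripleprod crossmx_vec3 mulmx3_vec3 dot_vec3; ring. Qed.

Lemma rot_vec3 x y z t : rot (vec3 x y z) t =
  let c := cos t in let s := sin t in
  mx3 (c + (1-c)*(x*x)) (- s*z + (1-c)*(x*y)) (s*y + (1-c)*(x*z))
      (s*z + (1-c)*(y*x)) (c + (1-c)*(y*y)) (-s*x + (1-c)*(y*z))
      (-s*y + (1-c)*(z*x)) (s*x + (1-c)*(z*y)) (c + (1-c)*(z*z)).
Proof.
rewrite /rot crossmx_vec3 mul_vec3_tr mx3_1 !scalemx3 !addmx3 /=.
by congr mx3; ring.
Qed.

End Matrix3.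

(** * Quaternions and rotations *)

Section Quaternion.
Variable R : realType.

Record quat := Quat { qa : R; qb : R; qc : R; qd : R }.

Definition qmul (x y : quat) : quat :=
  let: Quat a b c d := x in let: Quat a' b' c' d' := y in
  Quat (a*a' - b*b' - c*c' - d*d')
       (a*b' + a'*b + (c*d' - d*c'))
       (a*c' + a'*c + (d*b' - b*d'))
       (a*d' + a'*d + (b*c' - c*b')).

Definition qconj (x : quat) := let: Quat a b c d := x in Quat a (-b) (-c) (-d).
Definition qopp (x : quat) := let: Quat a b c d := x in Quat (-a) (-b) (-c) (-d).
Definition qnorm2 (x : quat) := let: Quat a b c d := x in a*a + b*b + c*c + d*d.
Definition qim2 (x : quat) := let: Quat _ b c d := x in b*b + c*c + d*d.

Definition qim_gram (x y : quat) :=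
  let: Quat _ b c d := x in let: Quat _ b' c' d' := y in
  (b*b + c*c + d*d) * (b'*b' + c'*c' + d'*d') - (b*b' + c*c' + d*d')^+2.

(* Euler-Rodrigues: the matrix of v |-> x v x^* on the pure quaternions *)
Definition qrot (x : quat) : 'M[R]_3 :=
  let: Quat a b c d := x in
  mx3 (a*a+b*b-c*c-d*d) (2*(b*c-a*d)) (2*(b*d+a*c))
      (2*(b*c+a*d)) (a*a-b*b+c*c-d*d) (2*(c*d-a*b))
      (2*(b*d-a*c)) (2*(c*d+a*b)) (a*a-b*b-c*c+d*d).

Lemma qnorm2E (x : quat) : qnorm2 x = qa x * qa x + qb x * qb x + qc x * qc x + qd x * qd x.
Proof. by case: x. Qed.

Lemma qim2E (x : quat) : qim2 x = qb x * qb x + qc x * qc x + qd x * qd x.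
Proof. by case: x. Qed.

Lemma qrotE (x : quat) : qrot x =
  mx3 (qa x*qa x+qb x*qb x-qc x*qc x-qd x*qd x) (2*(qb x*qc x-qa x*qd x))
      (2*(qb x*qd x+qa x*qc x)) (2*(qb x*qc x+qa x*qd x))
      (qa x*qa x-qb x*qb x+qc x*qc x-qd x*qd x) (2*(qc x*qd x-qa x*qb x))
      (2*(qb x*qd x-qa x*qc x)) (2*(qc x*qd x+qa x*qb x))
      (qa x*qa x-qb x*qb x-qc x*qc x+qd x*qd x).
Proof. by case: x. Qed.

Lemma qnorm2_mul x y : qnorm2 (qmul x y) = qnorm2 x * qnorm2 y.
Proof. by case: x => a b c d; case: y => a' b' c' d' /=; ring. Qed.

Lemma qnorm2_conj x : qnorm2 (qconj x) = qnorm2 x.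
Proof. by case: x => a b c d /=; ring. Qed.

Lemma qnorm2_opp x : qnorm2 (qopp x) = qnorm2 x.
Proof. by case: x => a b c d /=; ring. Qed.

Lemma qim_gram_cross (x y : quat) : qim_gram x y =
  (qc x * qd y - qd x * qc y)^+2 + (qd x * qb y - qb x * qd y)^+2
  + (qb x * qc y - qc x * qb y)^+2.
Proof. by case: x => a b c d; case: y => a' b' c' d' /=; ring. Qed.

Lemma qrot_mul x y : qrot x *m qrot y = qrot (qmul x y).
Proof.
by case: x => a b c d; case: y => a' b' c' d'; rewrite /= mulmx3; congr mx3; ring.
Qed.

Lemma qrot_tr x : (qrot x)^T = qrot (qconj x).
Proof. by case: x => a b c d; rewrite /= trmx3; congr mx3; ring. Qed.

Lemma qrot_opp x : qrot (qopp x) = qrot x.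
Proof. by case: x => a b c d /=; congr mx3; ring. Qed.

Lemma qrot_real r : qrot (Quat r 0 0 0) = r ^+ 2 *: 1%:M.
Proof. by rewrite /= mx3_1 scalemx3; congr mx3; ring. Qed.

Lemma qrot_orth x : (qrot x)^T *m qrot x = qnorm2 x ^+ 2 *: 1%:M.
Proof.
by case: x => a b c d; rewrite /= trmx3 mulmx3 mx3_1 scalemx3; congr mx3; ring.
Qed.

Lemma qrot_det x : \det (qrot x) = qnorm2 x ^+ 3.
Proof. by case: x => a b c d; rewrite /= det_mx3; ring. Qed.

Lemma rot_qrot x y z t : x*x + y*y + z*z = 1 ->
  rot (vec3 x y z) (2 * t) = qrot (Quat (cos t) (sin t * x) (sin t * y) (sin t * z)).
Proof.
move=> xyz1; rewrite rot_vec3 /= mulr_natl mulr2n cosD sinD.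
have cs1 := cos2Dsin2 t.
set c := cos t in cs1 *; set s := sin t in cs1 *.
have s2 : s^+2 * (x*x + y*y + z*z) = s^+2 by rewrite xyz1 mulr1.
have -> : 1 - (c * c - s * s) = 2 * s * s by lra.
by congr mx3; lra.
Qed.

Lemma qnorm2_gt0 (x : quat) : qa x != 0 -> 0 < qnorm2 x.
Proof.
case: x => a b c d /= a0; have : 0 < a ^+ 2 by rewrite lt0r sqrf_eq0 a0 sqr_ge0.
by nra.
Qed.

End Quaternion.
Arguments qrot : simpl never.

Section Lift.
Variable R : realType.

Ltac mx3_entries E :=
  let e00 := fresh "e" in let e01 := fresh "e" in let e02 := fresh "e" in
  let e10 := fresh "e" in let e11 := fresh "e" in let e12 := fresh "e" in
  let e20 := fresh "e" in let e21 := fresh "e" in let e22 := fresh "e" in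
  have e00 := congr1 (fun M : 'M_3 => M o0 o0) E; have e01 := congr1 (fun M : 'M_3 => M o0 o1) E;
  have e02 := congr1 (fun M : 'M_3 => M o0 o2) E; have e10 := congr1 (fun M : 'M_3 => M o1 o0) E;
  have e11 := congr1 (fun M : 'M_3 => M o1 o1) E; have e12 := congr1 (fun M : 'M_3 => M o1 o2) E;
  have e20 := congr1 (fun M : 'M_3 => M o2 o0) E; have e21 := congr1 (fun M : 'M_3 => M o2 o1) E;
  have e22 := congr1 (fun M : 'M_3 => M o2 o2) E;
  rewrite /= !mxE /= in e00 e01 e02 e10 e11 e12 e20 e21 e22.

Lemma sqr_sum3_eq0 (a b c : R) : a^+2 + b^+2 + c^+2 = 0 -> [/\ a = 0, b = 0 & c = 0].
Proof.
move=> abc0; have := sqr_ge0 a; have := sqr_ge0 b; have := sqr_ge0 c => c2 b2 a2.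
by split; apply/eqP; rewrite -sqrf_eq0; apply/eqP; lra.
Qed.

Lemma orthonormal_cross (x0 x1 x2 y0 y1 y2 z0 z1 z2 : R) :
  y0*y0 + y1*y1 + y2*y2 = 1 -> z0*z0 + z1*z1 + z2*z2 = 1 -> y0*z0 + y1*z1 + y2*z2 = 0 ->
  x0*x0 + x1*x1 + x2*x2 = 1 ->
  x0*(y1*z2 - y2*z1) + x1*(y2*z0 - y0*z2) + x2*(y0*z1 - y1*z0) = 1 ->
  [/\ y1*z2 - y2*z1 = x0, y2*z0 - y0*z2 = x1 & y0*z1 - y1*z0 = x2].
Proof.
move=> y_unit z_unit yz0 x_unit xyz1.
have : (y1*z2-y2*z1 - x0)^+2 + (y2*z0-y0*z2 - x1)^+2 + (y0*z1-y1*z0 - x2)^+2 = 0.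
  (* |y × z - x|^2 = |y|^2 |z|^2 - (y.z)^2 - 2 det[x y z] + |x|^2, by Lagrange's identity *)
  transitivity ((y0*y0+y1*y1+y2*y2)*(z0*z0+z1*z1+z2*z2) - (y0*z0+y1*z1+y2*z2)^+2
      - 2 * (x0*(y1*z2-y2*z1) + x1*(y2*z0-y0*z2) + x2*(y0*z1-y1*z0))
      + (x0*x0+x1*x1+x2*x2)); first by ring.
  by rewrite y_unit z_unit yz0 xyz1 x_unit; ring.
by case/sqr_sum3_eq0 => /eqP + /eqP + /eqP; rewrite !subr_eq0 => /eqP-> /eqP-> /eqP->.
Qed.

(* Shepperd's matrix: for a lift p of the rotation, shepperd i j = 4 p_i p_j *)
Definition shepperd (a00 a01 a02 a10 a11 a12 a20 a21 a22 : R) (i j : nat) : R :=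
  let t := a00 + a11 + a22 in
  match i, j with
  | 0, 0 => 1 + t
  | 1, 1 => 1 + 2 * a00 - t
  | 2, 2 => 1 + 2 * a11 - t
  | 3, 3 => 1 + 2 * a22 - t
  | 0, 1 | 1, 0 => a21 - a12
  | 0, 2 | 2, 0 => a02 - a20
  | 0, 3 | 3, 0 => a10 - a01
  | 1, 2 | 2, 1 => a01 + a10
  | 1, 3 | 3, 1 => a02 + a20
  | 2, 3 | 3, 2 => a12 + a21
  | _, _ => 0
  end.

Lemma SO3_mx3_qrot_lift a00 a01 a02 a10 a11 a12 a20 a21 a22 :
  SO3 (mx3 a00 a01 a02 a10 a11 a12 a20 a21 a22) ->
  exists p : quat R, qnorm2 p = 1 /\ qrot p = mx3 a00 a01 a02 a10 a11 a12 a20 a21 a22.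
Proof.
case=> orth det1; have orth' := mulmx1C orth.
rewrite trmx3 mulmx3 mx3_1 in orth; rewrite trmx3 mulmx3 mx3_1 in orth'.
rewrite det_mx3 in det1.
mx3_entries orth; mx3_entries orth'.
have [c00 c01 c02] : [/\ a11*a22-a12*a21 = a00, a12*a20-a10*a22 = a01 & a10*a21-a11*a20 = a02].
  by apply: orthonormal_cross; lra.
have [c10 c11 c12] : [/\ a21*a02-a22*a01 = a10, a22*a00-a20*a02 = a11 & a20*a01-a21*a00 = a12].
  by apply: orthonormal_cross; lra.
have [c20 c21 c22] : [/\ a01*a12-a02*a11 = a20, a02*a10-a00*a12 = a21 & a00*a11-a01*a10 = a22].
  by apply: orthonormal_cross; lra.
clear orth orth'.
set G := shepperd a00 a01 a02 a10 a11 a12 a20 a21 a22.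
have rank1 : forall m i j, (m < 4)%N -> (i < 4)%N -> (j < 4)%N ->
    G i j * G m m = G i m * G j m.
  move=> m i j; rewrite /G /shepperd.
  by case: m => [|[|[|[|//]]]]; case: i => [|[|[|[|//]]]]; case: j => [|[|[|[|//]]]] => _ _ _;
    lra.
have [m [m4 Gmm]] : exists m, (m < 4)%N /\ 0 < G m m.
  have : G 0%N 0%N + G 1%N 1%N + G 2%N 2%N + G 3%N 3%N = 4 by rewrite /G /shepperd; lra.
  case: (ltrP 0 (G 0%N 0%N)) => h0; first by exists 0%N.
  case: (ltrP 0 (G 1%N 1%N)) => h1; first by exists 1%N.
  case: (ltrP 0 (G 2%N 2%N)) => h2; first by exists 2%N.
  by exists 3%N; split => //; lra.
set sq := Num.sqrt (G m m).
have sq_gt0 : 0 < sq by rewrite sqrtr_gt0.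
have sqsq : sq * sq = G m m by rewrite -expr2 sqr_sqrtr // ltW.
set p := fun i => G i m / (2 * sq).
have pp : forall i j, (i < 4)%N -> (j < 4)%N -> 4 * (p i * p j) = G i j.
  move=> i j i4 j4; rewrite /p.
  apply: (mulIf (lt0r_neq0 Gmm)); rewrite rank1 // -sqsq; field.
  by rewrite lt0r_neq0.
have p00 := pp 0%N 0%N isT isT; have p01 := pp 0%N 1%N isT isT.
have p02 := pp 0%N 2%N isT isT; have p03 := pp 0%N 3%N isT isT.
have p11 := pp 1%N 1%N isT isT; have p12 := pp 1%N 2%N isT isT.
have p13 := pp 1%N 3%N isT isT; have p22 := pp 2%N 2%N isT isT.
have p23 := pp 2%N 3%N isT isT; have p33 := pp 3%N 3%N isT isT.
rewrite /G /shepperd in p00 p01 p02 p03 p11 p12 p13 p22 p23 p33.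
by exists (Quat (p 0%N) (p 1%N) (p 2%N) (p 3%N)); split; rewrite /=; [lra | congr mx3; lra].
Qed.

Lemma SO3_qrot_lift (M : 'M[R]_3) :
  SO3 M -> exists p : quat R, [/\ qnorm2 p = 1, qrot p = M & 0 <= qa p].
Proof.
rewrite [M]mx3E => /SO3_mx3_qrot_lift [p [p1 pM]].
case: (lerP 0 (qa p)) => pa; first by exists p.
exists (qopp p); rewrite qnorm2_opp qrot_opp; split => //.
by case: (p) pa => a b c d /= pa; lra.
Qed.

End Lift.

(** * The spherical triangle of two unit quaternions *)

Section Triangle.
Variable R : realType.

Lemma inv_sqrt_normalizes (g : R) : 0 < g ->
  0 < (Num.sqrt g)^-1 /\ (Num.sqrt g)^-1 ^+ 2 * g = 1.
Proof.
move=> g0; have s0 : 0 < Num.sqrt g by rewrite sqrtr_gt0.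
split; first by rewrite invr_gt0.
by rewrite exprVn -{2}(sqr_sqrtr (ltW g0)) mulVf // expf_neq0 // lt0r_neq0.
Qed.

Lemma sph_angle_vec3_scale (X0 X1 X2 Y0 Y1 Y2 Z0 Z1 Z2 kx ky kz th D1 D2 N : R) :
  let gXX := X0*X0 + X1*X1 + X2*X2 in
  let gXY := X0*Y0 + X1*Y1 + X2*Y2 in
  let gXZ := X0*Z0 + X1*Z1 + X2*Z2 in
  0 < kx -> 0 < ky -> 0 < kz -> kx^+2 * gXX = 1 ->
  gXX * (Y0*Y0 + Y1*Y1 + Y2*Y2) - gXY^+2 = D1 ->
  gXX * (Z0*Z0 + Z1*Z1 + Z2*Z2) - gXZ^+2 = D2 ->
  gXX * (Y0*Z0 + Y1*Z1 + Y2*Z2) - gXY * gXZ = N ->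
  0 < D1 -> 0 < D2 -> 0 < th < pi -> cos th = N / Num.sqrt (D1 * D2) ->
  sph_angle (vec3 (kx*X0) (kx*X1) (kx*X2)) (vec3 (ky*Y0) (ky*Y1) (ky*Y2))
            (vec3 (kz*Z0) (kz*Z1) (kz*Z2)) th.
Proof.
move=> gXX gXY gXZ kx0 ky0 kz0 X_unit eD1 eD2 eN D10 D20 th_pi cth.
rewrite /sph_angle /= !dot_vec3 !scale_vec3 !sub_vec3 !dot_vec3 cth; split => //.
(* the three identities below hold modulo kx^2 |X|^2 = 1 *)
have mod_unit (P Q E : R) : P - Q = (1 - kx^+2 * gXX) * E -> P = Q.
  by rewrite X_unit subrr mul0r => /eqP; rewrite subr_eq0 => /eqP.
have rescale (A B C : R) : A = ky*kz*kx^+2*N -> B = ky^+2*kx^+2*D1 -> C = kz^+2*kx^+2*D2 ->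
    N / Num.sqrt (D1 * D2) = A / (Num.sqrt B * Num.sqrt C).
  move=> -> -> ->; rewrite -!exprMn !(sqrtrM _ (sqr_ge0 _)) !sqrtr_sqr (sqrtrM _ (ltW D10)).
  have s1 : 0 < Num.sqrt D1 by rewrite sqrtr_gt0.
  have s2 : 0 < Num.sqrt D2 by rewrite sqrtr_gt0.
  by rewrite !gtr0_norm ?mulr_gt0 //; field; rewrite !lt0r_neq0.
apply: rescale; [ apply: (mod_unit _ _ (ky * kz * (Y0*Z0 + Y1*Z1 + Y2*Z2 - kx^+2 * gXY * gXZ)))
                | apply: (mod_unit _ _ (ky^+2 * (Y0*Y0 + Y1*Y1 + Y2*Y2 - kx^+2 * gXY^+2)))
                | apply: (mod_unit _ _ (kz^+2 * (Z0*Z0 + Z1*Z1 + Z2*Z2 - kx^+2 * gXZ^+2)))];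
  by rewrite -?eN -?eD1 -?eD2 /gXX /gXY /gXZ; ring.
Qed.

Definition qaxis (x : quat R) : 'cV[R]_3 :=
  let k := (Num.sqrt (qim2 x))^-1 in vec3 (k * qb x) (k * qc x) (k * qd x).

Definition qangle (x : quat R) : R := acos (qa x).

Lemma qangle_spec x : qnorm2 x = 1 -> 0 < qim2 x ->
  [/\ 0 < qangle x < pi, cos (qangle x) = qa x & sin (qangle x) = Num.sqrt (qim2 x)].
Proof.
rewrite qnorm2E qim2E => x1 im0.
have ax : -1 < qa x < 1 by apply/andP; split; nra.
have ax' : -1 <= qa x <= 1 by case/andP: ax => *; apply/andP; split; apply: ltW.
split; first by apply/andP; split; [apply: acos_gt0 | apply: acos_ltpi];
  case/andP: ax => *; apply/andP; split => //; apply: ltW.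
- by apply: acosK; rewrite in_itv.
- by rewrite /qangle sin_acos //; congr Num.sqrt; lra.
Qed.

Lemma qrot_axis_angle x : qnorm2 x = 1 -> 0 < qim2 x ->
  qrot x = rot (qaxis x) (2 * qangle x).
Proof.
move=> x1 im0; have [k0 k1] := inv_sqrt_normalizes im0.
rewrite /qaxis rot_qrot; last by rewrite -k1; case: (x) => a b c d /=; ring.
have [_ -> ->] := qangle_spec x1 im0.
rewrite !mulrA mulfV ?mul1r; last by rewrite gt_eqF // sqrtr_gt0.
by case: (x).
Qed.

Lemma unit_qaxis x : 0 < qim2 x -> unit_vec (qaxis x).
Proof.
move=> im0; have [_ k1] := inv_sqrt_normalizes im0.
by rewrite /unit_vec dot_vec3 -k1; case: (x) => a b c d /=; ring.
Qed.

(* The lift of h(C) = (h(B) h(A))^-1 with r q p = -1: the relation that the lifts of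
   the vertex rotations of a spherical triangle satisfy in the unit quaternions. *)
Definition qthird (p q : quat R) := qopp (qconj (qmul q p)).

Lemma qnorm2_qthird (p q : quat R) : qnorm2 (qthird p q) = qnorm2 q * qnorm2 p.
Proof. by rewrite qnorm2_opp qnorm2_conj qnorm2_mul. Qed.

Lemma qrot_qthird (p q : quat R) : qrot (qthird p q) = (qrot q *m qrot p)^T.
Proof. by rewrite qrot_opp -qrot_tr qrot_mul. Qed.

Lemma qim_gram_qthird_l (p q : quat R) : qim_gram p (qthird p q) = qnorm2 p * qim_gram p q.
Proof. by case: p => a b c d; case: q => a' b' c' d' /=; ring. Qed.

Lemma qim_gram_qthird_r (p q : quat R) : qim_gram q (qthird p q) = qnorm2 q * qim_gram p q.
Proof. by case: p => a b c d; case: q => a' b' c' d' /=; ring. Qed.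

Lemma qim2_gt0_of_gram (p q : quat R) : 0 < qim_gram p q -> 0 < qim2 p /\ 0 < qim2 q.
Proof.
case: p => a b c d; case: q => a' b' c' d' /= gram0.
have := sqr_ge0 (b*b' + c*c' + d*d').
have : 0 <= b*b + c*c + d*d by nra.
have : 0 <= b'*b' + c'*c' + d'*d' by nra.
by split; nra.
Qed.

Lemma tripleprod_qaxis_qthird (p q : quat R) :
  tripleprod (qaxis p) (qaxis q) (qaxis (qthird p q)) =
  - ((Num.sqrt (qim2 p))^-1 * (Num.sqrt (qim2 q))^-1 * (Num.sqrt (qim2 (qthird p q)))^-1
     * qim_gram p q).
Proof. case: p => a b c d; case: q => a' b' c' d'; rewrite /qaxis tripleprod_vec3 /=; ring. Qed.

Lemma qim2_qthird_gt0 (p q : quat R) :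
  qnorm2 p = 1 -> 0 < qim_gram p q -> 0 < qim2 (qthird p q).
Proof.
move=> p1 pq0; have [] // : 0 < qim2 p /\ 0 < qim2 (qthird p q).
by apply: qim2_gt0_of_gram; rewrite qim_gram_qthird_l p1 mul1r.
Qed.

Lemma sph_angles_qaxis (p q : quat R) :
  qnorm2 p = 1 -> qnorm2 q = 1 -> 0 < qim_gram p q ->
  let r := qthird p q in
  [/\ sph_angle (qaxis p) (qaxis q) (qaxis r) (qangle p),
      sph_angle (qaxis q) (qaxis r) (qaxis p) (qangle q)
    & sph_angle (qaxis r) (qaxis p) (qaxis q) (qangle r)].
Proof.
move=> p1 q1 pq0 r.
have [pim qim] := qim2_gt0_of_gram pq0.
have rim : 0 < qim2 r := qim2_qthird_gt0 p1 pq0.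
have r1 : qnorm2 r = 1 by rewrite qnorm2_qthird p1 q1 mulr1.
have pr : qim_gram p r = qim_gram p q by rewrite qim_gram_qthird_l p1 mul1r.
have qr : qim_gram q r = qim_gram p q by rewrite qim_gram_qthird_r q1 mul1r.
have [kp0 kp1] := inv_sqrt_normalizes pim.
have [kq0 kq1] := inv_sqrt_normalizes qim.
have [kr0 kr1] := inv_sqrt_normalizes rim.
have [pang cp _] := qangle_spec p1 pim.
have [qang cq _] := qangle_spec q1 qim.
have [rang cr _] := qangle_spec r1 rim.
have sqrt_gram2 : Num.sqrt (qim_gram p q * qim_gram p q) = qim_gram p q.
  by rewrite -expr2 sqrtr_sqr gtr0_norm.
move: cp cq cr pang qang rang kp0 kq0 kr0 kp1 kq1 kr1 pr qr sqrt_gram2.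
rewrite /r /qangle /qaxis; clear r r1 pim qim rim.
case: p p1 pq0 => a b c d /= p1 pq0; case: q q1 pq0 => a' b' c' d' /= q1.
set D := (_ * _ - _) => D0 cp cq cr pang qang rang kp0 kq0 kr0 kp1 kq1 kr1 pr qr sqrt_gram2.
split.
- apply: (sph_angle_vec3_scale (D1 := D) (D2 := D) (N := a * D)) => //; try by rewrite /D; ring.
  by rewrite cp sqrt_gram2 mulfK // gt_eqF.
- apply: (sph_angle_vec3_scale (D1 := D) (D2 := D) (N := a' * D)) => //; try by rewrite /D; ring.
  by rewrite cq sqrt_gram2 mulfK // gt_eqF.
- apply: (sph_angle_vec3_scale (D1 := D) (D2 := D) (N := D * (b*b' + c*c' + d*d' - a*a'))) => //.
  + by rewrite -pr; ring.
  + by rewrite -qr; ring.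
  + by rewrite /D; ring.
  + by rewrite cr sqrt_gram2 mulrAC divff ?gt_eqF // mul1r; ring.
Qed.

Lemma cw_triangle_qaxis (p q : quat R) :
  qnorm2 p = 1 -> qnorm2 q = 1 -> 0 < qim_gram p q ->
  let r := qthird p q in
  cw_triangle (qaxis p) (qaxis q) (qaxis r) (qangle p) (qangle q) (qangle r).
Proof.
move=> p1 q1 pq0 r; split; last exact: sph_angles_qaxis.
have [pim qim] := qim2_gt0_of_gram pq0.
have rim : 0 < qim2 r := qim2_qthird_gt0 p1 pq0.
split; try exact: unit_qaxis.
by rewrite tripleprod_qaxis_qthird oppr_lt0 !mulr_gt0 // invr_gt0 sqrtr_gt0.
Qed.

Lemma triangular_qrot (p q : quat R) :
  qnorm2 p = 1 -> qnorm2 q = 1 -> 0 < qim_gram p q ->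
  triangular (qrot p, qrot q, qrot (qthird p q)).
Proof.
move=> p1 q1 pq0; have [pim qim] := qim2_gt0_of_gram pq0.
exists (qaxis p), (qaxis q), (qaxis (qthird p q)), (qangle p), (qangle q), (qangle (qthird p q)).
split; first exact: cw_triangle_qaxis.
split; apply: qrot_axis_angle; rewrite ?qnorm2_qthird ?p1 ?q1 ?mulr1 //.
exact: qim2_qthird_gt0.
Qed.

End Triangle.

(** * The invariant skew_gram *)

Section SkewGram.
Variable R : realType.

Definition skew (M : 'M[R]_3) := M - M^T.

(* For h(A) = R_{x,s} and h(B) = R_{y,t} this is 64 sin(s)^2 sin(t)^2 |x × y|^2. *)
Definition skew_gram (h : rep3 R) :=
  \tr (skew (hA h) *m skew (hA h)) * \tr (skew (hB h) *m skew (hB h))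
  - (\tr (skew (hA h) *m skew (hB h)))^+2.

Lemma SO3_mulmx_tr (g : 'M[R]_3) : SO3 g -> g *m g^T = 1%:M.
Proof. by case=> gg _; apply: mulmx1C. Qed.

Lemma SO3_invmx (g : 'M[R]_3) : SO3 g -> invmx g = g^T.
Proof.
case=> gg _; have [_ g_unit] := mulmx1_unit gg.
by rewrite -[LHS]mul1mx -gg -mulmxA mulmxV // mulmx1.
Qed.

Lemma is_hom_C (A B C : 'M[R]_3) : is_hom ((A, B), C) -> C = (B *m A)^T.
Proof.
case; rewrite /hA /hB /hC /= => A_SO3 B_SO3 _ CBA1.
have BA_orth : (B *m A) *m (B *m A)^T = 1%:M.
  by rewrite trmx_mul mulmxA -(mulmxA B) (SO3_mulmx_tr A_SO3) mulmx1 SO3_mulmx_tr.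
by rewrite -[C]mulmx1 -BA_orth !mulmxA CBA1 mul1mx.
Qed.

Lemma skew_conj (g A : 'M[R]_3) : SO3 g -> skew (g *m A *m invmx g) = g *m skew A *m g^T.
Proof.
by move=> g_SO3; rewrite (SO3_invmx g_SO3) /skew !trmx_mul trmxK mulmxBr mulmxBl !mulmxA.
Qed.

Lemma mxtrace_conj_mul (g X Y : 'M[R]_3) : SO3 g ->
  \tr ((g *m X *m g^T) *m (g *m Y *m g^T)) = \tr (X *m Y).
Proof.
case=> gg _.
have -> : g *m X *m g^T *m (g *m Y *m g^T) = g *m (X *m Y *m g^T).
  by rewrite !mulmxA -(mulmxA (g *m X)) gg mulmx1 -!mulmxA.
by rewrite mxtrace_mulC -(mulmxA (X *m Y)) gg mulmx1.
Qed.

Lemma skew_gram_conj (g : 'M[R]_3) h : SO3 g -> skew_gram (conj_rep g h) = skew_gram h.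
Proof.
by move=> g_SO3; rewrite /skew_gram /conj_rep /hA /hB /= !skew_conj // !mxtrace_conj_mul.
Qed.

Lemma skew_gram_qrot (p q : quat R) C :
  skew_gram (qrot p, qrot q, C) = 1024 * qa p ^+ 2 * qa q ^+ 2 * qim_gram p q.
Proof.
case: p => a b c d; case: q => a' b' c' d'.
by rewrite /skew_gram /hA /hB /= /skew /qrot !trmx3 !(submx3, mulmx3, tr_mx3) /=; ring.
Qed.

Lemma skewZ k (M : 'M[R]_3) : skew (k *: M) = k *: skew M.
Proof. by apply/matrixP => i j; rewrite !mxE mulrBr. Qed.

Lemma skew_gram_scale k l (A B C : 'M[R]_3) :
  skew_gram ((k *: A, l *: B), C) = k ^+ 2 * l ^+ 2 * skew_gram ((A, B), C).
Proof.
by rewrite /skew_gram /hA /hB /= !skewZ -!scalemxAl -!scalemxAr !mxtraceZ; ring.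
Qed.

Lemma skew_gram_pos_triangular h : is_hom h -> 0 < skew_gram h -> triangular h.
Proof.
case: h => [[A B] C] h_hom; rewrite (is_hom_C h_hom).
case: h_hom; rewrite /hA /hB /= => A_SO3 B_SO3 _ _.
have [p [p1 <- _]] := SO3_qrot_lift A_SO3.
have [q [q1 <- _]] := SO3_qrot_lift B_SO3.
rewrite -qrot_qthird skew_gram_qrot => gram_pos.
apply: triangular_qrot => //; rewrite ltNge; apply: contraTN gram_pos => gram_le0.
rewrite -leNgt; apply: mulr_ge0_le0 gram_le0.
by apply: mulr_ge0; [apply: mulr_ge0 |]; rewrite ?sqr_ge0.
Qed.

End SkewGram.

Section SkewGramOpen.
Variable R : realType.

Lemma SO3_entry_le1 (M : 'M[R]_3) r s : SO3 M -> `|M r s| <= 1.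
Proof.
case=> + _; rewrite [in LHS](mx3E M) trmx3 mulmx3 mx3_1 => MM.
have e0 := congr1 (fun N : 'M[R]_3 => N o0 o0) MM.
have e1 := congr1 (fun N : 'M[R]_3 => N o1 o1) MM.
have e2 := congr1 (fun N : 'M[R]_3 => N o2 o2) MM.
rewrite !mxE /= in e0 e1 e2.
by rewrite ler_norml; case_ord3 r; case_ord3 s; apply/andP; split; nra.
Qed.

(* skew M = crossmx (vec3 (axial M 0) (axial M 1) (axial M 2)) *)
Definition axial (M : 'M[R]_3) (i : nat) : R :=
  match i with
  | 0 => M o2 o1 - M o1 o2 | 1 => M o0 o2 - M o2 o0 | _ => M o1 o0 - M o0 o1
  end.

Definition axial_cross (h : rep3 R) (k : nat) :=
  let i := (k.+1 %% 3)%N in let j := (k.+2 %% 3)%N in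
  axial (hA h) i * axial (hB h) j - axial (hA h) j * axial (hB h) i.

Lemma skew_gram_axial_cross h :
  skew_gram h = 4 * (axial_cross h 0 ^+ 2 + axial_cross h 1 ^+ 2 + axial_cross h 2 ^+ 2).
Proof.
case: h => [[A B] C]; rewrite /skew_gram /axial_cross /hA /hB /=.
rewrite [in LHS](mx3E A) [in LHS](mx3E B).
by rewrite /skew !(trmx3, submx3, mulmx3, tr_mx3) /axial /=; ring.
Qed.

Lemma axial_le2 (M : 'M[R]_3) i : SO3 M -> `|axial M i| <= 2.
Proof.
move=> M_SO3.
have diff_le2 r s r' s' : `|M r s - M r' s'| <= 2.
  apply: le_trans (ler_normB _ _) _.
  by have := SO3_entry_le1 r s M_SO3; have := SO3_entry_le1 r' s' M_SO3; lra.
by case: i => [|[|i]] /=; apply: diff_le2.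
Qed.

Lemma axialB_lt (M M' : 'M[R]_3) i e : (forall r s, `|M r s - M' r s| < e) ->
  `|axial M i - axial M' i| < 2 * e.
Proof.
move=> MM'.
have diffB_lt r s r' s' : `|(M r s - M r' s') - (M' r s - M' r' s')| < 2 * e.
  rewrite (_ : _ - _ = (M r s - M' r s) - (M r' s' - M' r' s')); last by ring.
  apply: le_lt_trans (ler_normB _ _) _.
  by have := MM' r s; have := MM' r' s'; lra.
by case: i => [|[|i]] /=; apply: diffB_lt.
Qed.

Lemma normr_mulB_lt (u v u' v' e : R) : `|u| <= 2 -> `|v'| <= 2 ->
  `|u - u'| < 2 * e -> `|v - v'| < 2 * e -> `|u * v - u' * v'| < 8 * e.
Proof.
move=> u2 v'2 uu' vv'.
rewrite (_ : _ - _ = u * (v - v') + v' * (u - u')); last by ring.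
apply: le_lt_trans (ler_normD _ _) _; rewrite !normrM.
have : `|u| * `|v - v'| <= 2 * `|v - v'| by apply: ler_wpM2r.
have : `|v'| * `|u - u'| <= 2 * `|u - u'| by apply: ler_wpM2r.
lra.
Qed.

Lemma axial_crossB_lt h h' k e : is_hom h -> is_hom h' -> close h h' e ->
  `|axial_cross h k - axial_cross h' k| < 16 * e.
Proof.
case=> A_SO3 B_SO3 _ _ [A'_SO3 B'_SO3 _ _] hh'.
have AA' r s : `|hA h r s - hA h' r s| < e by case: (hh' r s).
have BB' r s : `|hB h r s - hB h' r s| < e by case: (hh' r s).
rewrite /axial_cross; set i := (k.+1 %% 3)%N; set j := (k.+2 %% 3)%N.
have := normr_mulB_lt (axial_le2 i A_SO3) (axial_le2 j B'_SO3)
  (axialB_lt i AA') (axialB_lt j BB').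
have := normr_mulB_lt (axial_le2 j A_SO3) (axial_le2 i B'_SO3)
  (axialB_lt j AA') (axialB_lt i BB').
set x := axial (hA h) i * _; set y := axial (hA h) j * _.
set x' := axial (hA h') i * _; set y' := axial (hA h') j * _ => yy' xx'.
rewrite (_ : _ - _ = (x - x') - (y - y')); last by ring.
by apply: le_lt_trans (ler_normB _ _) _; lra.
Qed.

Lemma skew_gram_pos_near h : is_hom h -> 0 < skew_gram h ->
  exists2 e : R, 0 < e & forall h', is_hom h' -> close h h' e -> 0 < skew_gram h'.
Proof.
move=> h_hom gram_pos.
have [k [k3 hk]] : exists k, (k < 3)%N /\ axial_cross h k != 0.
  case: (eqVneq (axial_cross h 0) 0) => h0; last by exists 0%N.
  case: (eqVneq (axial_cross h 1) 0) => h1; last by exists 1%N.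
  case: (eqVneq (axial_cross h 2) 0) => h2; last by exists 2%N.
  by move: gram_pos; rewrite skew_gram_axial_cross h0 h1 h2 expr0n !addr0 mulr0 ltxx.
exists (`|axial_cross h k| / 16); first by rewrite divr_gt0 ?normr_gt0.
move=> h' h'_hom hh'; have := axial_crossB_lt k h_hom h'_hom hh'.
rewrite mulrC divfK ?pnatr_eq0 // => close_k.
have : 0 < axial_cross h' k ^+ 2.
  rewrite lt0r sqr_ge0 andbT sqrf_eq0; apply: contraTneq close_k => ->.
  by rewrite subr0 ltxx.
have := sqr_ge0 (axial_cross h' 0); have := sqr_ge0 (axial_cross h' 1).
have := sqr_ge0 (axial_cross h' 2); rewrite skew_gram_axial_cross.
by case: k {hk close_k hh'} k3 => [|[|[|//]]] _; lra.
Qed.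

End SkewGramOpen.

(** * Paths of representations *)

(* Dispatch on the syntax of the goal: a failed attempt to unify with continuousD or
   continuousM unfolds the operations of R and is very slow. *)
Ltac continuity := repeat match goal with
  | |- context [inPhantom (continuous (fun _ => ?c))] => exact: cvg_cst
  | |- context [inPhantom (continuous (fun s => @?f s + @?g s))] =>
      apply: (continuousD (f := f) (g := g))
  | |- context [inPhantom (continuous (fun s => @?f s * @?g s))] =>
      apply: (continuousM (s := f) (t := g))
  | |- context [inPhantom (continuous (fun s => - @?f s))] => apply: (continuousN (f := f))
  | |- _ => assumption
  end.

Section Path.
Variable R : realType.

Definition qline (p u : quat R) (t : R) :=
  Quat (qa p + t * qa u) (qb p + t * qb u) (qc p + t * qc u) (qd p + t * qd u).

(* the rotation of the unit quaternion x / |x|, written without square roots *)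
Definition qrotn (x : quat R) : 'M[R]_3 := (qnorm2 x)^-1 *: qrot x.

Definition qpath_rep (p q u w : quat R) (t : R) : rep3 R :=
  let x := qline p u t in let y := qline q w t in (qrotn x, qrotn y, qrotn (qthird x y)).

Lemma qline0 p u : qline p u 0 = p.
Proof. by case: p => a b c d; rewrite /qline /= !mul0r !addr0. Qed.

Lemma qrotn_unit x : qnorm2 x = 1 -> qrotn x = qrot x.
Proof. by rewrite /qrotn => ->; rewrite invr1 scale1r. Qed.

Lemma qrotn_SO3 x : 0 < qnorm2 x -> SO3 (qrotn x).
Proof.
move=> x0; have nx : qnorm2 x != 0 by rewrite gt_eqF.
rewrite /SO3 /qrotn detZ qrot_det -exprMn mulVf // expr1n; split => //.
rewrite !linearZ /= -scalemxAl scalerA qrot_orth scalerA -invfM -expr2.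
by rewrite mulVf ?scale1r // expf_neq0.
Qed.

Lemma qrotn_mul x y : qrotn x *m qrotn y = qrotn (qmul x y).
Proof.
by rewrite /qrotn -scalemxAl -scalemxAr scalerA qrot_mul qnorm2_mul invfM mulrC.
Qed.

Lemma qrotn_real r : r != 0 -> qrotn (Quat r 0 0 0) = 1%:M.
Proof.
move=> r0; rewrite /qrotn qrot_real scalerA.
have -> : qnorm2 (Quat r 0 0 0) = r ^+ 2 by rewrite /= expr2 !mul0r !addr0.
by rewrite mulVf ?scale1r // expf_neq0.
Qed.

Lemma qmul_qthird (x y : quat R) :
  qmul (qmul (qthird x y) y) x = Quat (- (qnorm2 y * qnorm2 x)) 0 0 0.
Proof. by case: x => a b c d; case: y => a' b' c' d' /=; congr Quat; ring. Qed.

Lemma qpath_rep_hom p q u w t : 0 < qnorm2 (qline p u t) -> 0 < qnorm2 (qline q w t) ->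
  is_hom (qpath_rep p q u w t).
Proof.
rewrite /qpath_rep; set x := qline p u t; set y := qline q w t => x0 y0.
have xy0 : 0 < qnorm2 (qthird x y) by rewrite qnorm2_qthird mulr_gt0.
split; rewrite /hA /hB /hC /=; try exact: qrotn_SO3.
by rewrite !qrotn_mul qmul_qthird qrotn_real // oppr_eq0 mulf_neq0 // gt_eqF.
Qed.

Lemma qpath_rep0 p q u w : qnorm2 p = 1 -> qnorm2 q = 1 ->
  qpath_rep p q u w 0 = (qrot p, qrot q, (qrot q *m qrot p)^T).
Proof.
move=> p1 q1; rewrite /qpath_rep !qline0 -qrot_qthird !qrotn_unit //.
by rewrite qnorm2_qthird p1 q1 mulr1.
Qed.

Lemma skew_gram_qrotn_gt0 (x y : quat R) C : qa x != 0 -> qa y != 0 -> 0 < qim_gram x y ->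
  0 < skew_gram ((qrotn x, qrotn y), C).
Proof.
move=> x0 y0 xy0; rewrite skew_gram_scale skew_gram_qrot.
have sqr_gt0 (r : R) : r != 0 -> 0 < r ^+ 2 by move=> r0; rewrite lt0r sqrf_eq0 r0 sqr_ge0.
have nx : (qnorm2 x)^-1 != 0 by rewrite invr_neq0 // gt_eqF // qnorm2_gt0.
have ny : (qnorm2 y)^-1 != 0 by rewrite invr_neq0 // gt_eqF // qnorm2_gt0.
apply: mulr_gt0; first exact: mulr_gt0 (sqr_gt0 _ nx) (sqr_gt0 _ ny).
by apply: mulr_gt0 xy0; apply: mulr_gt0 (sqr_gt0 _ y0); apply: mulr_gt0 (sqr_gt0 _ x0).
Qed.

Definition qcontinuous (x : R -> quat R) (t : R) :=
  [/\ {for t, continuous (fun s => qa (x s))}, {for t, continuous (fun s => qb (x s))},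
      {for t, continuous (fun s => qc (x s))} & {for t, continuous (fun s => qd (x s))}].

Lemma qcontinuous_line p u t : qcontinuous (qline p u) t.
Proof. by split; rewrite /qline /=; continuity. Qed.

Lemma qcontinuous_qthird x y t : qcontinuous x t -> qcontinuous y t ->
  qcontinuous (fun s => qthird (x s) (y s)) t.
Proof.
have qthirdE (a b : quat R) : qthird a b =
  Quat (- (qa b * qa a - qb b * qb a - qc b * qc a - qd b * qd a))
       (qa b * qb a + qa a * qb b + (qc b * qd a - qd b * qc a))
       (qa b * qc a + qa a * qc b + (qd b * qb a - qb b * qd a))
       (qa b * qd a + qa a * qd b + (qb b * qc a - qc b * qb a)).
  by case: a => ? ? ? ?; case: b => ? ? ? ? /=; congr Quat; rewrite opprK.
move=> [xa xb xc xd] [ya yb yc yd].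
rewrite (funext (fun s => qthirdE (x s) (y s))).
by split; rewrite /=; continuity.
Qed.

Lemma continuous_at_ext (f g : R -> R) t : f =1 g -> {for t, continuous g} ->
  {for t, continuous f}.
Proof. by move=> /funext ->. Qed.

Lemma qrotn_continuous x t : qcontinuous x t -> 0 < qnorm2 (x t) ->
  forall i j, {for t, continuous (fun s => qrotn (x s) i j)}.
Proof.
case=> xa xb xc xd x0 i j.
have nx : {for t, continuous (fun s => (qnorm2 (x s))^-1)}.
  apply: continuousV; first by rewrite gt_eqF.
  by apply: continuous_at_ext; [by move=> s; rewrite qnorm2E; reflexivity | continuity].
by case_ord3 i; case_ord3 j; (apply: continuous_at_ext;
  first by move=> s; rewrite mxE qrotE mxE /=; reflexivity); continuity.
Qed.

End Path.

Section PathExistence.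
Variable R : realType.

Lemma close_of_continuous (H : R -> rep3 R) t :
  (forall i j, [/\ {for t, continuous (fun s => hA (H s) i j)},
                  {for t, continuous (fun s => hB (H s) i j)} &
                  {for t, continuous (fun s => hC (H s) i j)}]) ->
  forall e, 0 < e -> exists2 d : R, 0 < d & forall s, `|s - t| < d -> close (H t) (H s) e.
Proof.
move=> H_cont e e0.
have near_entry (f : R -> R) : {for t, continuous f} -> \forall s \near t, `|f t - f s| < e.
  by move=> /cvgrPdist_lt /(_ e e0).
have : \forall s \near t, forall ij : 'I_3 * 'I_3,
    [/\ `|hA (H t) ij.1 ij.2 - hA (H s) ij.1 ij.2| < e,
        `|hB (H t) ij.1 ij.2 - hB (H s) ij.1 ij.2| < e &
        `|hC (H t) ij.1 ij.2 - hC (H s) ij.1 ij.2| < e].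
  apply: (filter_forall (nbhs_filter t)) => -[i j]; have [cA cB cC] := H_cont i j.
  by apply: filterS3 (near_entry _ cA) (near_entry _ cB) (near_entry _ cC) => s.
case/nbhs_ballP => d d0 near_t; exists d => // s ts i j.
by apply: (near_t s _ (i, j)); rewrite -ball_normE /ball_ /= distrC.
Qed.

Lemma qpath_rep_close p q u w t :
  0 < qnorm2 (qline p u t) -> 0 < qnorm2 (qline q w t) ->
  forall e, 0 < e -> exists2 d : R, 0 < d &
    forall s, `|s - t| < d -> close (qpath_rep p q u w t) (qpath_rep p q u w s) e.
Proof.
move=> x0 y0; apply: close_of_continuous => i j.
have xy0 : 0 < qnorm2 (qthird (qline p u t) (qline q w t)) by rewrite qnorm2_qthird mulr_gt0.
have [x_cont y_cont] := (qcontinuous_line p u t, qcontinuous_line q w t).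
by split; apply: qrotn_continuous => //; apply: qcontinuous_qthird.
Qed.

(* If Im p and Im q are parallel, push p along i and q along j, with signs making
   the k-component of the cross product of the imaginary parts grow from 0. *)
Lemma exists_dir_qim_gram_gt0 (p q : quat R) : exists u w : quat R,
  [/\ qa u = 1, qa w = 1 & forall t, 0 < t -> 0 < qim_gram (qline p u t) (qline q w t)].
Proof.
case: (ltrP 0 (qim_gram p q)) => pq.
  exists (Quat 1 0 0 0), (Quat 1 0 0 0); split => // t t0.
  by move: pq; rewrite !qim_gram_cross /qline /= !mulr0 !addr0.
have : qim_gram p q = 0.
  by apply/eqP; rewrite eq_le pq qim_gram_cross !addr_ge0 ?sqr_ge0.
rewrite qim_gram_cross => /sqr_sum3_eq0 [_ _ cross3].
have [sx [sx1 sxp]] : exists sx : R, sx * sx = 1 /\ 0 <= sx * qb p.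
  by case: (lerP 0 (qb p)) => ?; [exists 1 | exists (-1)]; split; lra.
have [sy [sy1 syq]] : exists sy : R, sy * sy = 1 /\ 0 <= sy * qc q.
  by case: (lerP 0 (qc q)) => ?; [exists 1 | exists (-1)]; split; lra.
exists (Quat 1 sx 0 0), (Quat 1 0 sy 0); split => // t t0.
rewrite qim_gram_cross /qline /= !mulr0 !addr0.
set c3 := (qb p + t * sx) * (qc q + t * sy) - qc p * qb q.
have c3_pos : 0 < sx * sy * c3.
  have -> : sx * sy * c3 = sx * sy * (qb p * qc q - qc p * qb q)
      + t * (sy * sy * (sx * qb p) + sx * sx * (sy * qc q)) + t ^+ 2 * (sx * sx) * (sy * sy).
    by rewrite /c3; ring.
  rewrite cross3 sx1 sy1 mulr0 add0r !mul1r mulr1.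
  have : 0 <= t * (sx * qb p + sy * qc q) by rewrite mulr_ge0 ?addr_ge0 // ltW.
  have : 0 < t ^+ 2 by rewrite exprn_gt0.
  lra.
have c3_0 : c3 != 0 by apply: contraTneq c3_pos => ->; rewrite mulr0 ltxx.
have : 0 < c3 ^+ 2 by rewrite lt0r sqrf_eq0 c3_0 sqr_ge0.
by rewrite addrC; apply: ltr_wpDr; rewrite addr_ge0 ?sqr_ge0.
Qed.

Lemma qnorm2_line_gt0 (p u : quat R) t : qnorm2 p = 1 -> qa u = 1 -> 0 <= qa p -> 0 <= t ->
  0 < qnorm2 (qline p u t).
Proof.
move=> p1 u1 pa; rewrite le0r => /orP[/eqP-> | t0]; first by rewrite qline0 p1.
by apply: qnorm2_gt0; rewrite /= u1 mulr1 gt_eqF //; lra.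
Qed.

Definition hom_path (H : R -> rep3 R) :=
  (forall t, 0 <= t -> is_hom (H t)) /\
  forall t, 0 <= t -> forall e, 0 < e ->
    exists2 d : R, 0 < d & forall s, `|s - t| < d -> close (H t) (H s) e.

Lemma triangularizing_path h : is_hom h -> exists H : R -> rep3 R,
  [/\ hom_path H, H 0 = h & forall t, 0 < t -> 0 < skew_gram (H t)].
Proof.
case: h => [[A B] C] h_hom; rewrite (is_hom_C h_hom).
case: h_hom; rewrite /hA /hB /= => A_SO3 B_SO3 _ _.
have [p [p1 <- p_re]] := SO3_qrot_lift A_SO3.
have [q [q1 <- q_re]] := SO3_qrot_lift B_SO3.
have [u [w [u1 w1 gram_pos]]] := exists_dir_qim_gram_gt0 p q.
have x0 t : 0 <= t -> 0 < qnorm2 (qline p u t) by exact: qnorm2_line_gt0.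
have y0 t : 0 <= t -> 0 < qnorm2 (qline q w t) by exact: qnorm2_line_gt0.
exists (qpath_rep p q u w); split.
- by split=> t t0; [apply: qpath_rep_hom | apply: qpath_rep_close]; rewrite ?x0 ?y0.
- exact: qpath_rep0.
- move=> t t0; apply: skew_gram_qrotn_gt0; last exact: gram_pos.
  + by rewrite /= u1 mulr1 gt_eqF //; lra.
  + by rewrite /= w1 mulr1 gt_eqF //; lra.
Qed.

End PathExistence.

(** * Characters *)

Local Open Scope classical_set_scope.

Section Characters.
Variable R : realType.

Definition skew_gram_pos_chars : set (set (rep3 R)) :=
  [set X | exists h, [/\ is_hom h, X = char_of h & 0 < skew_gram h]].

Lemma char_of_refl (h : rep3 R) : char_of h h.
Proof.
exists 1%:M; first by split; rewrite ?trmx1 ?mul1mx ?det1.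
by case: h => [[A B] C]; rewrite /conj_rep /hA /hB /hC /= invmx1 !mul1mx !mulmx1.
Qed.

Lemma open_char_nbhs V (h : rep3 R) : open_char V -> is_hom h -> V (char_of h) ->
  exists2 e : R, 0 < e & forall h', is_hom h' -> close h h' e -> V (char_of h').
Proof.
case=> _ [_ V_open] h_hom Vh; have [e e0 near_h] := V_open h (conj h_hom Vh).
by exists e => // h' h'_hom hh'; case: (near_h h' h'_hom hh').
Qed.

Lemma open_char_skew_gram_pos : open_char skew_gram_pos_chars.
Proof.
split; first by move=> X [h [h_hom -> _]]; exists h.
split=> [h [] // | h [h_hom [h0 [_ h0_h gram_pos]]]].
have [g g_SO3 h_g] : char_of h0 h by rewrite -h0_h; exact: char_of_refl.
have [e e0 near_pos] : exists2 e : R, 0 < e &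
    forall h', is_hom h' -> close h h' e -> 0 < skew_gram h'.
  by apply: skew_gram_pos_near; rewrite // h_g skew_gram_conj.
by exists e => // h' h'_hom hh'; split=> //; exists h'; split => //; apply: near_pos.
Qed.

Lemma char_path_hom_path (H : R -> rep3 R) : hom_path H -> char_path (fun t => char_of (H t)).
Proof.
case=> H_hom H_cont; split=> [t /andP[t0 _] | V V_open t /andP[t0 _] VHt].
  by exists (H t) => //; apply: H_hom.
have [e e0 near_V] := open_char_nbhs V_open (H_hom t t0) VHt.
have [d d0 near_H] := H_cont t t0 e e0.
by exists d => // s /andP[s0 _] st; apply: near_V; [apply: H_hom | apply: near_H].
Qed.

Lemma dense_char_skew_gram_pos : dense_char skew_gram_pos_chars.
Proof.
move=> V V_open [X VX]; have [h h_hom eX] := V_open.1 X VX; rewrite eX in VX.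
have [H [[H_hom H_cont] H0 H_pos]] := triangularizing_path h_hom.
have [e e0 near_V] := open_char_nbhs V_open h_hom VX.
have [d d0 near_H] := H_cont 0 (lexx 0) e e0.
have d2 : 0 < d / 2 by rewrite divr_gt0.
exists (char_of (H (d / 2))); split; last first.
  by exists (H (d / 2)); split=> //; [apply/H_hom/ltW | apply: H_pos].
apply: near_V; first exact/H_hom/ltW.
by rewrite -H0; apply: near_H; rewrite subr0 gtr0_norm //; lra.
Qed.

End Characters.

Theorem mainTheorem4 (R : realType) :
  (exists U : set (set (rep3 R)),
      [/\ open_char U, dense_char U & forall X, U X -> triangular_char X]) /\
  (forall X : set (rep3 R), is_char X ->
     exists gamma : R -> set (rep3 R),
       [/\ char_path gamma, gamma 0 = X &
           forall t, 0 < t <= 1 -> triangular_char (gamma t)]).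
Proof.
split.
  exists (@skew_gram_pos_chars R); split.
  - exact: open_char_skew_gram_pos.
  - exact: dense_char_skew_gram_pos.
  - move=> X [h [h_hom -> gram_pos]]; exists h; split=> //.
    exact: skew_gram_pos_triangular.
move=> X [h h_hom ->].
have [H [H_path H0 H_pos]] := triangularizing_path h_hom.
exists (fun t => char_of (H t)); split; first exact: char_path_hom_path.
  by rewrite H0.
move=> t /andP[t0 _]; have Ht_hom := H_path.1 t (ltW t0).
by exists (H t); split=> //; apply: skew_gram_pos_triangular Ht_hom (H_pos t t0).
Qed.
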